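(* Let $\mathcal A$ be an abelian category. (1) The following are equivalent: (i) $\mathcal A$ is spectral; (ii) $\mathcal A$ has enough injectives and $N$ is $M$-$F$-split for all objects $M,N$ of $\mathcal A$ and every fully invariant subobject $F$ of $N$; (iii) $\mathcal A$ has enough injectives and every object $N$ is self-$F$-split for every fully invariant subobject $F$ of $N$; (iv) $\mathcal A$ has enough injectives and $N$ is $M$-$F$-split for all objects $M,N$ with $N$ injective and every fully invariant subobject $F$ of $N$; (v) $\mathcal A$ has enough injectives and every injective object $N$ is self-$F$-split for every fully invariant subobject $F$ of $N$. (2) The following are equivalent: (i) $\mathcal A$ is spectral; (ii) $\mathcal A$ has enough projectives and $N$ is dual $M$-$F$-split for all objects $M,N$ and every fully invariant subobject $F$ of $N$; (iii) $\mathcal A$ has enough projectives and every object $N$ is dual self-$F$-split for every fully invariant subobject $F$ of $N$; (iv) $\mathcal A$ has enough projectives and $N$ is dual $M$-$F$-split for all objects $M,N$ with $M$ projective and every fully invariant subobject $F$ of $N$; (v) $\mathcal A$ has enough projectives and every projective object $N$ is dual self-$F$-split for every fully invariant subobject $F$ of $N$.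
   Context: An abelian category is spectral if every short exact sequence in it splits. A morphism $s:X\to Y$ is a section if $ts=1_X$ for some $t$, a retraction if $st=1_Y$ for some $t$. A subobject $F$ of $N$ with inclusion $i:F\to N$ is fully invariant if for every morphism $h:N\to N$ there is $\alpha:F\to F$ with $hi=i\alpha$. For objects $M,N$ and a fully invariant subobject $F$ of $N$ with cokernel $d:N\to N/F$: $N$ is $M$-$F$-split if for every morphism $g:M\to N$, $\ker(dg)$ is a section; $N$ is dual $M$-$F$-split if for every morphism $g:N\to M$, $\mathrm{coker}(gi)$ is a retraction. Self-$F$-split means $N$-$F$-split (and similarly for the dual notion). *)

From HB Require Import structures.
From mathcomp Require Import all_boot all_algebra.
Set Implicit Arguments. Unset Strict Implicit. Unset Printing Implicit Defensive.
Import GRing.Theory.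
Local Open Scope ring_scope.

Record preadditive := PreAdditive {
  Obj :> Type;
  Mor : Obj -> Obj -> zmodType;
  comp : forall X Y Z : Obj, Mor Y Z -> Mor X Y -> Mor X Z;
  idm : forall X : Obj, Mor X X;
  compA : forall (W X Y Z : Obj) (h : Mor Y Z) (g : Mor X Y) (f : Mor W X),
      comp h (comp g f) = comp (comp h g) f;
  comp1m : forall (X Y : Obj) (f : Mor X Y), comp (idm Y) f = f;
  compm1 : forall (X Y : Obj) (f : Mor X Y), comp f (idm X) = f;
  compDl : forall (X Y Z : Obj) (f f' : Mor Y Z) (g : Mor X Y),
      comp (f + f') g = comp f g + comp f' g;
  compDr : forall (X Y Z : Obj) (f : Mor Y Z) (g g' : Mor X Y),
      comp f (g + g') = comp f g + comp f g'
}.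

Arguments Mor {C} X Y : rename.
Arguments comp {C X Y Z} f g : rename.
Arguments idm {C} X : rename.

Section Defs.
Variable C : preadditive.

Definition mono {X Y : C} (f : Mor X Y) : Prop :=
  forall (Z : C) (a b : Mor Z X), comp f a = comp f b -> a = b.
Definition epi {X Y : C} (f : Mor X Y) : Prop :=
  forall (Z : C) (a b : Mor Y Z), comp a f = comp b f -> a = b.
Definition is_section {X Y : C} (s : Mor X Y) : Prop :=
  exists t : Mor Y X, comp t s = idm X.
Definition is_retraction {X Y : C} (s : Mor X Y) : Prop :=
  exists t : Mor Y X, comp s t = idm Y.

Definition is_kernel {X Y K : C} (f : Mor X Y) (k : Mor K X) : Prop :=
  comp f k = 0 /\
  forall (Z : C) (h : Mor Z X), comp f h = 0 -> exists! u : Mor Z K, comp k u = h.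
Definition is_cokernel {X Y Q : C} (f : Mor X Y) (c : Mor Y Q) : Prop :=
  comp c f = 0 /\
  forall (Z : C) (h : Mor Y Z), comp h f = 0 -> exists! u : Mor Q Z, comp u c = h.

Definition is_zero_obj (Z : C) : Prop := idm Z = 0.

Definition is_biproduct (X Y P : C) (i1 : Mor X P) (i2 : Mor Y P)
    (p1 : Mor P X) (p2 : Mor P Y) : Prop :=
  [/\ comp p1 i1 = idm X, comp p2 i2 = idm Y, comp p2 i1 = 0, comp p1 i2 = 0
    & comp i1 p1 + comp i2 p2 = idm P].

Definition abelian : Prop :=
  (exists Z : C, is_zero_obj Z) /\
      (forall X Y : C, exists (P : C) (i1 : Mor X P) (i2 : Mor Y P)
          (p1 : Mor P X) (p2 : Mor P Y), is_biproduct i1 i2 p1 p2) /\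
      (forall (X Y : C) (f : Mor X Y), exists (K : C) (k : Mor K X), is_kernel f k) /\
      (forall (X Y : C) (f : Mor X Y), exists (Q : C) (c : Mor Y Q), is_cokernel f c) /\
      (forall (X Y : C) (f : Mor X Y), mono f -> exists (Z : C) (g : Mor Y Z), is_kernel g f) /\
      (forall (X Y : C) (f : Mor X Y), epi f -> exists (Z : C) (g : Mor Z X), is_cokernel g f).

Definition short_exact {A B D : C} (f : Mor A B) (g : Mor B D) : Prop :=
  is_kernel g f /\ is_cokernel f g.

Definition spectral : Prop :=
  forall (A B D : C) (f : Mor A B) (g : Mor B D), short_exact f g -> is_section f.

Definition injective_obj (E : C) : Prop :=
  forall (A B : C) (m : Mor A B) (f : Mor A E), mono m ->
    exists f' : Mor B E, comp f' m = f.
Definition projective_obj (P : C) : Prop :=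
  forall (A B : C) (e : Mor A B) (f : Mor P B), epi e ->
    exists f' : Mor P A, comp e f' = f.

Definition enough_injectives : Prop :=
  forall X : C, exists (E : C) (m : Mor X E), injective_obj E /\ mono m.
Definition enough_projectives : Prop :=
  forall X : C, exists (P : C) (e : Mor P X), projective_obj P /\ epi e.

Definition fully_invariant {F N : C} (i : Mor F N) : Prop :=
  forall h : Mor N N, exists alpha : Mor F F, comp h i = comp i alpha.

(* N is M-F-split, F given by the inclusion i : F -> N:
   for every g : M -> N, ker(d g) is a section, d : N -> N/F the cokernel of i
   (quantified over all choices of cokernel and kernel; they are unique up to iso) *)
Definition MF_split (M : C) {F N : C} (i : Mor F N) : Prop :=
  forall (Q : C) (d : Mor N Q), is_cokernel i d ->
  forall (g : Mor M N) (K : C) (k : Mor K M), is_kernel (comp d g) k -> is_section k.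

Definition dual_MF_split (M : C) {F N : C} (i : Mor F N) : Prop :=
  forall (g : Mor N M) (Q : C) (c : Mor M Q), is_cokernel (comp g i) c -> is_retraction c.

End Defs.

Arguments abelian : clear implicits.
Arguments spectral : clear implicits.
Arguments enough_injectives : clear implicits.
Arguments enough_projectives : clear implicits.

(* A spectral abelian category is one in which every mono is a section and
   every epi a retraction; then every object is injective and projective and all
   the splitting conditions hold trivially.  Conversely, take the fully invariant
   subobject F = 0: self-0-splitness of N says exactly that kernels of
   endomorphisms of N split.  For f : X -> Y, a splitting of ker f is recovered
   from one of the kernel of the endomorphism (x, y) |-> (0, f x) of X (+) Y, so
   kernels of maps between injectives split.  Embedding the cokernel of a mono
   m : A -> E (E injective) into an injective exhibits m as such a kernel, so m
   splits, every object is a retract of an injective, hence injective, and every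
   short exact sequence splits.  Part (2) is dual, using F = N, for which dual
   self-N-splitness says that cokernels of endomorphisms split. *)

From Pilot Require Import Defs.
From mathcomp Require Import all_boot all_algebra.
(* Re-imported so that [comp] denotes composition in a [preadditive] category
   rather than [ssrfun.comp]. *)
Import Pilot.Defs.
Set Implicit Arguments. Unset Strict Implicit. Unset Printing Implicit Defensive.
Import GRing.Theory.
Local Open Scope ring_scope.

Section Opposite.
Variable C : preadditive.

(* Kernels, monos, sections and cokernels in [op] are, up to conversion,
   cokernels, epis, retractions and kernels in [C]; dual statements are obtained
   by instantiating a lemma at [op C]. *)

Definition op : preadditive :=
  @PreAdditive C (fun X Y => Mor Y X) (fun X Y Z f g => comp g f) (@idm C)
    (fun W X Y Z h g f => esym (compA f g h)) (fun X Y f => compm1 f)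
    (fun X Y f => comp1m f) (fun X Y Z f f' g => compDr g f f')
    (fun X Y Z f g g' => compDl g g' f).

Lemma is_biproduct_op (X Y P : C) (i1 : Mor X P) (i2 : Mor Y P)
    (p1 : Mor P X) (p2 : Mor P Y) :
  is_biproduct i1 i2 p1 p2 -> @is_biproduct op X Y P p1 p2 i1 i2.
Proof. by case=> *; split. Qed.

Lemma abelian_op : abelian C -> abelian op.
Proof.
move=> [Z0 [Hbi [Hker [Hcok [Hmono Hepi]]]]].
split=> //; split=> [X Y|].
  have [P [i1 [i2 [p1 [p2 bp]]]]] := Hbi X Y.
  by exists P, p1, p2, i1, i2; apply: is_biproduct_op.
split=> [X Y f|]; first exact: Hcok Y X f.
split=> [X Y f|]; first exact: Hker Y X f.
by split=> X Y f; [exact: Hepi Y X f | exact: Hmono Y X f].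
Qed.

Lemma injective_op (E : C) : @injective_obj op E <-> projective_obj E.
Proof. by split=> inj A B e f; apply: inj. Qed.

Lemma enough_injectives_op : enough_injectives op <-> enough_projectives C.
Proof.
by split=> enough X; have [E [m [/injective_op inj_E mono_m]]] := enough X;
  exists E, m.
Qed.

End Opposite.

Section Preadditive.
Variable C : preadditive.
Implicit Types X Y Z P K Q : C.

Lemma comp0m X Y Z (g : Mor X Y) : comp (0 : Mor Y Z) g = 0.
Proof. by apply: (addrI (comp 0 g)); rewrite -compDl !addr0. Qed.

Lemma compm0 X Y Z (f : Mor Y Z) : comp f (0 : Mor X Y) = 0.
Proof. by apply: (addrI (comp f 0)); rewrite -compDr !addr0. Qed.

Lemma compBl X Y Z (f f' : Mor Y Z) (g : Mor X Y) :
  comp (f - f') g = comp f g - comp f' g.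
Proof. by apply: (addIr (comp f' g)); rewrite -compDl !subrK. Qed.

Lemma compBr X Y Z (f : Mor Y Z) (g g' : Mor X Y) :
  comp f (g - g') = comp f g - comp f g'.
Proof. by apply: (addIr (comp f g')); rewrite -compDr !subrK. Qed.

Lemma kernel_mono X Y K (f : Mor X Y) (k : Mor K X) : is_kernel f k -> mono k.
Proof.
move=> [fk0 univ] Z a b kab.
have fka0 : comp f (comp k a) = 0 by rewrite compA fk0 comp0m.
have [u [_ uniq_u]] := univ Z _ fka0.
by rewrite -(uniq_u a erefl) (uniq_u b (esym kab)).
Qed.

Lemma kernel_comp_mono X Y Y' K (f : Mor X Y) (n : Mor Y Y') (k : Mor K X) :
  is_kernel f k -> mono n -> is_kernel (comp n f) k.
Proof.
move=> [fk0 univ] mono_n; split; first by rewrite -compA fk0 compm0.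
move=> Z h nfh0; apply: univ; apply: mono_n.
by rewrite compA nfh0 compm0.
Qed.

Lemma mono_kernel_of_cokernel X Y Q (m : Mor X Y) (c : Mor Y Q) :
  abelian C -> mono m -> is_cokernel m c -> is_kernel c m.
Proof.
move=> [_ [_ [_ [_ [Hmono _]]]]] mono_m [cm0 univ].
have [Z [g [gm0 gm_univ]]] := Hmono _ _ _ mono_m.
have [u [uc _]] := univ _ _ gm0.
split=> // W h ch0; apply: gm_univ.
by rewrite -uc -compA ch0 compm0.
Qed.

Lemma retract_injective X E (s : Mor X E) (r : Mor E X) :
  comp r s = idm X -> injective_obj E -> injective_obj X.
Proof.
move=> rs inj_E A B m f mono_m.
have [g gm] := inj_E _ _ m (comp s f) mono_m.
by exists (comp r g); rewrite -compA gm compA rs comp1m.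
Qed.

Lemma biproduct_injective X Y P (i1 : Mor X P) (i2 : Mor Y P)
    (p1 : Mor P X) (p2 : Mor P Y) :
  is_biproduct i1 i2 p1 p2 -> injective_obj X -> injective_obj Y ->
  injective_obj P.
Proof.
move=> [_ _ _ _ sum1] inj_X inj_Y A B m f mono_m.
have [g1 g1m] := inj_X _ _ m (comp p1 f) mono_m.
have [g2 g2m] := inj_Y _ _ m (comp p2 f) mono_m.
exists (comp i1 g1 + comp i2 g2).
by rewrite compDl -!compA g1m g2m !compA -compDl sum1 comp1m.
Qed.

Lemma kernel_section_of_biproduct_endo X Y P (i1 : Mor X P) (i2 : Mor Y P)
    (p1 : Mor P X) (p2 : Mor P Y) (f : Mor X Y) K (k : Mor K X) K' (k' : Mor K' P) :
  is_biproduct i1 i2 p1 p2 -> is_kernel f k ->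
  is_kernel (comp i2 (comp f p1)) k' -> is_section k' -> is_section k.
Proof.
move=> [p1i1 p2i2 _ _ _] kk [hk'0 k'_univ] [t tk'].
have fp1k'0 : comp f (comp p1 k') = 0.
  have := congr1 (comp p2) hk'0.
  by rewrite compm0 !compA p2i2 comp1m -compA.
have hi1k0 : comp (comp i2 (comp f p1)) (comp i1 k) = 0.
  by rewrite -!compA (compA p1) p1i1 comp1m kk.1 !compm0.
have [w [kw _]] := kk.2 _ _ fp1k'0.
have [u [k'u _]] := k'_univ _ _ hi1k0.
exists (comp w (comp t i1)).
have wu : comp w u = idm K.
  apply: (kernel_mono kk).
  by rewrite compA kw -compA k'u compA p1i1 comp1m compm1.
by rewrite -!compA -k'u (compA t) tk' comp1m wu.
Qed.

End Preadditive.

Lemma cokernel_epi (C : preadditive) (X Y Q : C) (f : Mor X Y) (c : Mor Y Q) :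
  is_cokernel f c -> epi c.
Proof. exact: (@kernel_mono (op C) Y X Q f c). Qed.

Section Spectral.
Variable C : preadditive.
Implicit Types X Y Z P K Q : C.

Lemma ses_section_retraction X Y Z (f : Mor X Y) (g : Mor Y Z) :
  short_exact f g -> is_section f -> is_retraction g.
Proof.
move=> [[gf0 _] [_ univ]] [t tf].
have proj0 : comp (idm Y - comp f t) f = 0.
  by rewrite compBl comp1m -compA tf compm1 subrr.
have [s [sg _]] := univ _ _ proj0.
exists s; apply: (cokernel_epi (conj gf0 univ)).
by rewrite -compA sg compBr compm1 compA gf0 comp0m subr0 comp1m.
Qed.

Lemma spectral_mono_section X Y (m : Mor X Y) :
  abelian C -> spectral C -> mono m -> is_section m.
Proof.
move=> HC S mono_m; have [_ [_ [_ [Hcok _]]]] := HC.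
have [Q [c cc]] := Hcok _ _ m.
by apply: (S _ _ _ m c); split=> //; apply: mono_kernel_of_cokernel.
Qed.

Lemma spectral_iff_injective :
  abelian C -> spectral C <-> forall X, injective_obj X.
Proof.
move=> HC; split=> [S X A B m f mono_m | inj A B D f g [kf _]].
  have [t tm] := spectral_mono_section HC S mono_m.
  by exists (comp f t); rewrite -compA tm compm1.
have [t tf] := inj A _ _ f (idm A) (kernel_mono kf).
by exists t.
Qed.

Lemma spectral_enough_injectives : abelian C -> spectral C -> enough_injectives C.
Proof.
move=> HC /(spectral_iff_injective HC) inj X.
by exists X, (idm X); split=> // Z a b; rewrite !comp1m.
Qed.

Lemma spectral_MF_split (M N F : C) (i : Mor F N) :
  abelian C -> spectral C -> MF_split M i.
Proof.
move=> HC S Q d _ g K k kk.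
exact: spectral_mono_section HC S (kernel_mono kk).
Qed.
End Spectral.

Lemma spectral_op (C : preadditive) : spectral (op C) <-> spectral C.
Proof.
split=> S A B D f g [kf cf].
  have se : @short_exact (op C) D B A g f := conj cf kf.
  exact: (ses_section_retraction se (S _ _ _ g f se)).
have se : @short_exact C D B A g f := conj cf kf.
exact: (ses_section_retraction se (S _ _ _ g f se)).
Qed.

Definition endo_kernels_split (C : preadditive) (N : C) : Prop :=
  forall (h : Mor N N) (K : C) (k : Mor K N), is_kernel h k -> is_section k.

Definition endo_cokernels_split (C : preadditive) (N : C) : Prop :=
  forall (h : Mor N N) (Q : C) (c : Mor N Q), is_cokernel h c -> is_retraction c.

Section InjectiveEndoKernels.
Variable C : preadditive.
Hypotheses (HC : abelian C) (EI : enough_injectives C).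
Hypothesis endo_split : forall N : C, injective_obj N -> endo_kernels_split N.

Lemma kernel_section_between_injectives (X Y K : C) (f : Mor X Y) (k : Mor K X) :
  injective_obj X -> injective_obj Y -> is_kernel f k -> is_section k.
Proof.
move=> inj_X inj_Y kk; have [_ [Hbi [Hker _]]] := HC.
have [P [i1 [i2 [p1 [p2 bp]]]]] := Hbi X Y.
have [K' [k' kk']] := Hker _ _ (comp i2 (comp f p1)).
apply: (kernel_section_of_biproduct_endo bp kk kk').
exact: endo_split (biproduct_injective bp inj_X inj_Y) _ _ _ kk'.
Qed.

Lemma mono_into_injective_section (A E : C) (m : Mor A E) :
  injective_obj E -> mono m -> is_section m.
Proof.
move=> inj_E mono_m; have [_ [_ [_ [Hcok _]]]] := HC.
have [Q [c cc]] := Hcok _ _ m.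
have [E' [n [inj_E' mono_n]]] := EI Q.
apply: (kernel_section_between_injectives (f := comp n c) inj_E inj_E').
exact: kernel_comp_mono (mono_kernel_of_cokernel HC mono_m cc) mono_n.
Qed.

Lemma spectral_of_injective_endo_kernels_split : spectral C.
Proof.
apply/(spectral_iff_injective HC) => X.
have [E [m [inj_E mono_m]]] := EI X.
have [r rm] := mono_into_injective_section inj_E mono_m.
exact: retract_injective rm inj_E.
Qed.
End InjectiveEndoKernels.

Lemma spectral_enough_projectives (C : preadditive) :
  abelian C -> spectral C -> enough_projectives C.
Proof.
move=> HC /spectral_op S.
exact/enough_injectives_op/(spectral_enough_injectives (abelian_op HC) S).
Qed.

Lemma spectral_dual_MF_split (C : preadditive) (M N F : C) (i : Mor F N) :
  abelian C -> spectral C -> dual_MF_split M i.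
Proof.
move=> HC /spectral_op S g Q c cc.
exact: (@spectral_mono_section (op C) _ _ c (abelian_op HC) S (cokernel_epi cc)).
Qed.

Lemma spectral_of_projective_endo_cokernels_split (C : preadditive) :
  abelian C -> enough_projectives C ->
  (forall N : C, projective_obj N -> endo_cokernels_split N) -> spectral C.
Proof.
move=> HC /enough_injectives_op EI endo_split; apply/spectral_op.
apply: (spectral_of_injective_endo_kernels_split (abelian_op HC) EI) => N.
by move=> /injective_op; apply: endo_split.
Qed.

Section FullyInvariantSplitting.
Variable C : preadditive.

Lemma zero_fully_invariant (Z N : C) : fully_invariant (0 : Mor Z N).
Proof. by move=> h; exists 0; rewrite !compm0. Qed.

Lemma zero_mono (Z N : C) : is_zero_obj Z -> mono (0 : Mor Z N).
Proof. by move=> Z0 W a b _; rewrite -(comp1m a) -(comp1m b) Z0 !comp0m. Qed.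

Lemma cokernel_zero (Z N : C) : is_cokernel (0 : Mor Z N) (idm N).
Proof.
split=> [|W g _]; first by rewrite compm0.
by exists g; split=> [|u]; rewrite compm1.
Qed.

Lemma endo_kernels_split_of_MF_split_zero (Z N : C) :
  MF_split N (0 : Mor Z N) -> endo_kernels_split N.
Proof.
move=> N_split h K k kk; apply: (N_split _ _ (cokernel_zero Z N) h).
by rewrite comp1m.
Qed.

Lemma endo_cokernels_split_of_dual_MF_split_idm (N : C) :
  dual_MF_split N (idm N) -> endo_cokernels_split N.
Proof. by move=> N_split h Q c; rewrite -{1}(compm1 h); apply: N_split. Qed.

Hypothesis HC : abelian C.

Lemma spectral_of_injective_self_MF_split :
  enough_injectives C ->
  (forall (N F : C) (i : Mor F N), injective_obj N ->
     mono i -> fully_invariant i -> MF_split N i) ->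
  spectral C.
Proof.
move=> EI self_split; have [[Z Z0] _] := HC.
apply: (spectral_of_injective_endo_kernels_split HC EI) => N inj_N.
apply: (@endo_kernels_split_of_MF_split_zero Z).
by apply: (self_split N Z 0 inj_N); [exact: zero_mono | exact: zero_fully_invariant].
Qed.

Lemma spectral_of_projective_self_dual_MF_split :
  enough_projectives C ->
  (forall (N F : C) (i : Mor F N), projective_obj N ->
     mono i -> fully_invariant i -> dual_MF_split N i) ->
  spectral C.
Proof.
move=> EP self_split.
apply: (spectral_of_projective_endo_cokernels_split HC EP) => N proj_N.
apply: endo_cokernels_split_of_dual_MF_split_idm.
apply: (self_split N N (idm N) proj_N) => [W a b|h]; first by rewrite !comp1m.
by exists h; rewrite comp1m compm1.
Qed.
End FullyInvariantSplitting.

Theorem theorem6p1 (C : preadditive) (HC : abelian C) :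
  (* (1) *)
  ((spectral C <->
      enough_injectives C /\
      forall (M N F : C) (i : Mor F N), mono i -> fully_invariant i -> MF_split M i)
   /\ (spectral C <->
      enough_injectives C /\
      forall (N F : C) (i : Mor F N), mono i -> fully_invariant i -> MF_split N i)
   /\ (spectral C <->
      enough_injectives C /\
      forall (M N F : C) (i : Mor F N), injective_obj N ->
        mono i -> fully_invariant i -> MF_split M i)
   /\ (spectral C <->
      enough_injectives C /\
      forall (N F : C) (i : Mor F N), injective_obj N ->
        mono i -> fully_invariant i -> MF_split N i))
  /\
  (* (2) *)
  ((spectral C <->
      enough_projectives C /\
      forall (M N F : C) (i : Mor F N), mono i -> fully_invariant i -> dual_MF_split M i)
   /\ (spectral C <->
      enough_projectives C /\
      forall (N F : C) (i : Mor F N), mono i -> fully_invariant i -> dual_MF_split N i)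
   /\ (spectral C <->
      enough_projectives C /\
      forall (M N F : C) (i : Mor F N), projective_obj M ->
        mono i -> fully_invariant i -> dual_MF_split M i)
   /\ (spectral C <->
      enough_projectives C /\
      forall (N F : C) (i : Mor F N), projective_obj N ->
        mono i -> fully_invariant i -> dual_MF_split N i)).
Proof.
have inj_iff (P : Prop) :
    ((forall (M N F : C) (i : Mor F N), MF_split M i) -> P) ->
    (P -> forall (N F : C) (i : Mor F N), injective_obj N ->
       mono i -> fully_invariant i -> MF_split N i) ->
    (spectral C <-> enough_injectives C /\ P).
  move=> strongest_P P_weakest; split=> [S | [EI /P_weakest]].
    split; first exact: spectral_enough_injectives.
    by apply: strongest_P => *; apply: spectral_MF_split.
  exact: spectral_of_injective_self_MF_split.
have proj_iff (P : Prop) :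
    ((forall (M N F : C) (i : Mor F N), dual_MF_split M i) -> P) ->
    (P -> forall (N F : C) (i : Mor F N), projective_obj N ->
       mono i -> fully_invariant i -> dual_MF_split N i) ->
    (spectral C <-> enough_projectives C /\ P).
  move=> strongest_P P_weakest; split=> [S | [EP /P_weakest]].
    split; first exact: spectral_enough_projectives.
    by apply: strongest_P => *; apply: spectral_dual_MF_split.
  exact: spectral_of_projective_self_dual_MF_split.
split; (split; [|split; [|split]]);
  by [apply: inj_iff => H *; apply: H | apply: proj_iff => H *; apply: H].
Qed.
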